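(* Let $\mathcal{G}$ be a $p$-periodic graph on $V$ with arena $\mathcal{D}$, and suppose $\mathcal{G}$ is reflexive and temporally connected. If some augmented arena $\mathcal{A}$ of $\mathcal{D}$ contains a star, then every temporal node of $\mathcal{A}^*$ is an anchored star in $\mathcal{A}^*$, i.e., $\Gamma_t(u,\mathcal{A}^* )=V$ and $(t,u)$ is anchored for all $t\in\mathbb{Z}_p$, $u\in V$.
   Context: Let $V$ be a finite set and $p\ge 1$ an integer; $[t]_p$ denotes $t \bmod p$. A $p$-periodic graph $\mathcal{G}=(G_0,\dots,G_{p-1})^*$ is the infinite sequence of directed graphs $G_t=(V,E_{[t]_p})$, $t=0,1,\dots$, where $E_0,\dots,E_{p-1}\subseteq V\times V$ (self-loops allowed), each $G_i$ sinkless. $\mathcal{G}$ is reflexive if $(u,u)\in E_i$ for all $u\in V$, $i\in\mathbb{Z}_p$. $\mathcal{G}$ is temporally connected if for all $u,v\in V$ and every time $t\ge 0$ there is a journey from $u$ to $v$ starting at time $t$: a sequence $z_0=u,z_1,\dots,z_k=v$ with $(z_j,z_{j+1})\in E_{[t+j]_p}$ for $0\le j<k$. An arena on $V$ of length $p$ is a directed graph with vertex set $\mathbb{Z}_p\times V$ (temporal nodes) all of whose edges have the form $((i,w),([i+1]_p,w'))$. The arena of $\mathcal{G}$ is the arena $\mathcal{D}$ with $((i,u),([i+1]_p,v))\in E(\mathcal{D})$ iff $(u,v)\in E_i$. Write $\Gamma_t(u,\mathcal{M})=\{v : ((t,u),([t+1]_p,v))\in E(\mathcal{M})\}$. Game: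 first the cop, then the robber choose vertices. In each round $t$, with cop at $c$ and robber at $r$, the cop must move to some $c'\in\Gamma_{[t]_p}(c,\mathcal{D})$; if $c'=r$ the cop wins; otherwise the robber must move to some $r'\in\Gamma_{[t]_p}(r,\mathcal{D})$ and the next round starts. A configuration $(t,c,r)$ ($t\in\mathbb{Z}_p$) is the state at the start of a round with index $\equiv t\pmod p$, cop at $c$, robber at $r$, cop to move; it is copwin if from it the cop can force capture in finitely many rounds against every robber strategy. An augmented arena of $\mathcal{D}$ is an arena $\mathcal{A}$ with $E(\mathcal{D})\subseteq E(\mathcal{A})$ such that for every edge $((t,x),([t+1]_p,y))\in E(\mathcal{A})$ the configuration $(t,x,y)$ is copwin. $\mathcal{A}^*$ is the maximum augmented arena (edge set = union of edge sets of all augmented arenas). A temporal node $(t,u)$ is a star in an arena $\mathcal{A}$ if $\Gamma_t(u,\mathcal{A})=V$; it is anchored if there is a directed walk (possibly of length $0$) in $\mathcal{D}$ from some $(0,v)$ to $(t,u)$. *)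

From mathcomp Require Import all_boot.
Set Implicit Arguments. Unset Strict Implicit. Unset Printing Implicit Defensive.

(* A p-periodic graph on V is given by E : nat -> rel V, where only E 0..E (p-1)
   matter; the graph at time t is E (t %% p).  Time indices of temporal nodes /
   configurations are naturals t < p (representing Z_p). *)

Section Cops.
Variables (V : finType) (p : nat) (E : nat -> rel V).

Definition reflexive_pg : Prop := forall i u, i < p -> E i u u.
Definition sinkless_pg : Prop := forall i u, i < p -> exists v, E i u v.

Fixpoint journey (t k : nat) (u v : V) : Prop :=
  match k with
  | 0 => u = v
  | k'.+1 => exists w, E (t %% p) u w /\ journey t.+1 k' w v
  end.

Definition temporally_connected : Prop :=
  forall u v t, exists k, journey t k u v.

(* an arena on V of length p: A i x y means ((i,x),([i+1]_p,y)) is an edge,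
   for i < p (values at i >= p are irrelevant) *)
Definition arena := nat -> V -> V -> Prop.

Definition arenaD : arena := fun i x y => E (i %% p) x y.

Definition Gamma (A : arena) (t : nat) (u : V) : V -> Prop := A (t %% p) u.

(* copwin configurations: least fixed point (cop captures in finitely many rounds
   against every robber strategy) *)
Inductive copwin : nat -> V -> V -> Prop :=
  | cw_capture t c r : Gamma arenaD t c r -> copwin t c r
  | cw_step t c r c' : Gamma arenaD t c c' -> c' <> r ->
      (forall r', Gamma arenaD t r r' -> copwin (t.+1 %% p) c' r') ->
      copwin t c r.

Definition augmented (A : arena) : Prop :=
  (forall t x y, t < p -> arenaD t x y -> A t x y) /\
  (forall t x y, t < p -> A t x y -> copwin t x y).

Definition arenaStar : arena := fun t x y => exists A, augmented A /\ A t x y.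

Definition is_star (A : arena) (t : nat) (u : V) : Prop :=
  forall v, Gamma A t u v.

Definition anchored (t : nat) (u : V) : Prop :=
  exists v k, k %% p = t /\ journey 0 k v u.

End Cops.

From mathcomp Require Import all_boot.
From mathcomp Require Import zify.

Set Implicit Arguments.
Unset Strict Implicit.

(* Every configuration at the star (t0, u0) is copwin. By temporal connectivity
   and reflexivity (waiting in place), a cop at any temporal node (t, c) can
   arrive at u0 at a time congruent to t0; if the robber is not caught on the
   way, the cop then wins from the star. Hence every configuration is copwin,
   so the arena of all copwin edges is augmented and complete: every temporal
   node is a star of the maximum augmented arena. Anchoring is also a matter of
   waiting: stay at u from time 0 up to time t. *)

Section PeriodicCops.
Variables (V : finType) (p : nat) (E : nat -> rel V).
Hypothesis p_gt0 : 0 < p.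
Hypothesis E_refl : reflexive_pg p E.

Lemma journey_stay (u : V) m t : journey p E t m u u.
Proof.
elim: m t => [|m IHm] t //=.
by exists u; split; [apply: E_refl; rewrite ltn_pmod | apply: IHm].
Qed.

Lemma journey_wait (c u : V) k m t :
  journey p E t k c u -> journey p E t (k + m) c u.
Proof.
elim: k t c => [|k IHk] t c /=; first by move=> ->; apply: journey_stay.
by case=> w [Ecw jw]; exists w; split => //; apply: IHk.
Qed.

Lemma journey_arrive_at (c u : V) t t0 :
  temporally_connected p E -> t0 < p ->
  exists k, journey p E t k c u /\ (t + k) %% p = t0.
Proof.
move=> tc lt_t0p; have [k jk] := tc c u t.
exists (k + (p - (t + k) %% p + t0)); split; first exact: journey_wait.
have lt_modp : (t + k) %% p < p by rewrite ltn_pmod.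
rewrite addnA.
have -> : t + k + (p - (t + k) %% p + t0) = ((t + k) %/ p).+1 * p + t0.
  by have := divn_eq (t + k) p; lia.
by rewrite modnMDl modn_small.
Qed.

Lemma copwin_of_journey (t0 : nat) (u0 : V) :
  (forall r, copwin p E t0 u0 r) ->
  forall k t c, journey p E t k c u0 -> (t + k) %% p = t0 ->
  forall r, copwin p E (t %% p) c r.
Proof.
move=> win_u0; elim=> [|k IHk] t c /=; first by move=> -> ; rewrite addn0 => ->.
case=> w [Ecw jw] arrive r.
have Gamma_cw : Gamma p (arenaD p E) (t %% p) c w by rewrite /Gamma /arenaD !modn_mod.
have [<-|neq_wr] := eqVneq w r; first exact: cw_capture.
apply: (cw_step Gamma_cw); first exact/eqP.
move=> r' _; have -> : (t %% p).+1 %% p = t.+1 %% p by rewrite -addn1 modnDml addn1.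
by apply: IHk => //; rewrite addSnnS.
Qed.

Lemma copwin_everywhere (t0 : nat) (u0 : V) :
  temporally_connected p E -> t0 < p -> (forall r, copwin p E t0 u0 r) ->
  forall t c r, t < p -> copwin p E t c r.
Proof.
move=> tc lt_t0p win_u0 t c r lt_tp.
have [k [jk arrive]] := journey_arrive_at c u0 t tc lt_t0p.
by rewrite -(modn_small lt_tp); apply: copwin_of_journey jk arrive r.
Qed.

Lemma copwin_augmented : augmented p E (copwin p E).
Proof.
split=> // t x y _ Dxy; apply: cw_capture.
by rewrite /Gamma /arenaD !modn_mod.
Qed.

Lemma copwin_sub_arenaStar t x y : copwin p E t x y -> arenaStar p E t x y.
Proof. by exists (copwin p E); split; [apply: copwin_augmented|]. Qed.

Lemma anchored_refl t u : t < p -> anchored p E t u.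
Proof. by move=> lt_tp; exists u, t; split; [apply: modn_small | apply: journey_stay]. Qed.

End PeriodicCops.

Theorem mainTheorem8 (V : finType) (p : nat) (E : nat -> rel V) :
  0 < p ->
  sinkless_pg p E ->
  reflexive_pg p E ->
  temporally_connected p E ->
  (exists A : arena V, augmented p E A /\
     exists t u, t < p /\ is_star p A t u) ->
  forall t u, t < p ->
    is_star p (arenaStar p E) t u /\ anchored p E t u.
Proof.
move=> p_gt0 _ E_refl tc [A [[_ A_copwin] [t0 [u0 [lt_t0p star_u0]]]]] t u lt_tp.
have win_u0 r : copwin p E t0 u0 r.
  by apply: A_copwin => //; have := star_u0 r; rewrite /Gamma modn_small.
split; last exact: anchored_refl.
move=> v; apply: copwin_sub_arenaStar.
by apply: (copwin_everywhere p_gt0 E_refl tc lt_t0p win_u0); rewrite ltn_pmod.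
Qed.
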